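(* Let $k\ge2$ and let $z_{ij}\in\mathbb{C}$ with $|z_{ij}|=1$ for all $1\le i<j\le k$, $z_{ji}=\overline{z_{ij}}$. Then the positive map $\Phi_{2k}^{(\mathbf z)}$ defined below is indecomposable; equivalently there is a state $\rho$ on $\mathbb{C}^{2k}\otimes\mathbb{C}^{2k}$ with positive partial transpose such that $\operatorname{Tr}(W^{(\mathbf z)}\rho)<0$, where $W^{(\mathbf z)}=\frac{1}{2k}\sum_{i,j=1}^{2k}e_{ij}\otimes\Phi^{(\mathbf z)}_{2k}(e_{ij})$.
   Context: $e_{ij}=|e_i\rangle\langle e_j|$ for the standard basis of $\mathbb{C}^{2k}$. Write $X\in M_{2k}(\mathbb{C})$ as a $k\times k$ block matrix $X=(X_{ij})$ with $X_{ij}\in M_2(\mathbb{C})$, and let $R_2(Y)=\mathbb{I}_2\operatorname{Tr}Y-Y$ on $M_2(\mathbb{C})$. $\Phi_{2k}^{(\mathbf z)}(X)$ is the block matrix with diagonal blocks $\frac{1}{2(k-1)}(\operatorname{Tr}X-\operatorname{Tr}X_{ii})\mathbb{I}_2$ and off-diagonal blocks $-\frac{z_{ij}}{2(k-1)}(X_{ij}-R_2(X_{ji}))$, $i\ne j$. A positive map $\Lambda$ is decomposable if $\Lambda=\Lambda_1+\Lambda_2\circ\mathrm T$ with $\Lambda_1,\Lambda_2$ completely positive and $\mathrm T$ the transposition; otherwise indecomposable. A state $\rho$ is PPT if $(\mathrm{id}\otimes\mathrm T)\rho\ge0$. *)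

From HB Require Import structures.
From mathcomp Require Import all_boot all_order all_algebra.
Set Implicit Arguments. Unset Strict Implicit. Unset Printing Implicit Defensive.
Import Order.TTheory GRing.Theory Num.Theory.
Local Open Scope ring_scope.

Section QDefs.
Variable C : numClosedFieldType.

(* Identification 'I_(m * n) ~ 'I_m * 'I_n (inverse of mxvec_index):
   C^m (x) C^n = C^(m*n), outer index in 'I_m, inner index in 'I_n. *)
Definition unpair (m n : nat) (a : 'I_(m * n)) : 'I_m * 'I_n :=
  enum_val (cast_ord (esym (mxvec_cast m n)) a).

Definition psd (n : nat) (A : 'M[C]_n) : Prop :=
  forall v : 'cV[C]_n, 0 <= ((map_mx (fun x : C => x^*) v)^T *m A *m v) 0 0.

Definition linmap (n : nat) (L : 'M[C]_n -> 'M[C]_n) : Prop :=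
  forall (a : C) (X Y : 'M[C]_n), L (a *: X + Y) = a *: L X + L Y.

Definition positive_map (n : nat) (L : 'M[C]_n -> 'M[C]_n) : Prop :=
  forall X : 'M[C]_n, psd X -> psd (L X).

(* (id_m (x) L) acting on M_m (x) M_n = M_(m*n), blockwise *)
Definition ampl (m n : nat) (L : 'M[C]_n -> 'M[C]_n) (X : 'M[C]_(m * n))
  : 'M[C]_(m * n) :=
  \matrix_(a, b)
    L (\matrix_(s, t) X (mxvec_index (unpair a).1 s) (mxvec_index (unpair b).1 t))
      (unpair a).2 (unpair b).2.

Definition CP (n : nat) (L : 'M[C]_n -> 'M[C]_n) : Prop :=
  linmap L /\ forall (m : nat) (X : 'M[C]_(m * n)), psd X -> psd (@ampl m n L X).

Definition decomposable (n : nat) (L : 'M[C]_n -> 'M[C]_n) : Prop :=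
  exists L1 L2 : 'M[C]_n -> 'M[C]_n,
    [/\ CP L1, CP L2 & forall X, L X = L1 X + L2 (X^T)].

Definition blk (k : nat) (X : 'M[C]_(k * 2)) (p q : 'I_k) : 'M[C]_2 :=
  \matrix_(s, t) X (mxvec_index p s) (mxvec_index q t).

Definition R2 (Y : 'M[C]_2) : 'M[C]_2 := (\tr Y)%:M - Y.

Definition Phi (k : nat) (z : 'I_k -> 'I_k -> C) (X : 'M[C]_(k * 2))
  : 'M[C]_(k * 2) :=
  \matrix_(a, b)
    let p := (unpair a).1 in let s := (unpair a).2 in
    let q := (unpair b).1 in let t := (unpair b).2 in
    if p == q then
      (2 * (k.-1)%:R)^-1 * (\tr X - \tr (blk X p p)) * (s == t)%:R
    else
      - (z p q / (2 * (k.-1)%:R)) * (blk X p q s t - R2 (blk X q p) s t).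

End QDefs.

From HB Require Import structures.
From mathcomp Require Import all_boot all_order all_algebra.
From mathcomp Require Import ring.
Set Implicit Arguments. Unset Strict Implicit. Unset Printing Implicit Defensive.
Import Order.TTheory GRing.Theory Num.Theory.
Local Open Scope ring_scope.

(* Positivity.  Writing w_p for the 2-dimensional slices of a vector w and X_pq for the
   2x2 blocks of X, <w, Phi(X) w> is a positive multiple of a sum over pairs p <> q of
     |w_p|^2 tr X_qq + |w_q|^2 tr X_pp
       - z_pq <w_p, (X_pq - R_2(X_qp)) w_q> - z_qp <w_q, (X_qp - R_2(X_pq)) w_p>.
   Each such term is a nonnegative combination of the values of the positive block matrix
   [[X_pp, X_pq], [X_qp, X_qq]] at the test vector (|w_q|^2 w_p, - z_pq |w_p|^2 w_q) and at
   its image under the spin flip (u0, u1) -> (conj u1, - conj u0); since R_2 is the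
   adjugate on M_2, the flip is what turns X_qp into R_2(X_qp).

   Indecomposability.  If Phi = L1 + L2 o T with L1, L2 completely positive, the Choi
   matrices of L1 and L2 are positive.  Pairing them with an explicit state rho supported on
   two sites, and with a rank-one decomposition of its partial transpose, shows that the
   Choi matrix of Phi has a nonnegative expectation in rho, whereas a direct computation
   gives -4/(k-1). *)

Section Indexing.
Variables m n : nat.

Lemma unpair_mxvec_index (i : 'I_m) (j : 'I_n) : unpair (mxvec_index i j) = (i, j).
Proof. by rewrite /unpair /mxvec_index cast_ordK enum_rankK. Qed.

Lemma mxvec_index_unpair (a : 'I_(m * n)) : mxvec_index (unpair a).1 (unpair a).2 = a.
Proof. by rewrite /unpair /mxvec_index -surjective_pairing enum_valK cast_ordKV. Qed.

Lemma eq_mxvec_index (i i' : 'I_m) (j j' : 'I_n) :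
  (mxvec_index i j == mxvec_index i' j') = (i == i') && (j == j').
Proof.
apply/eqP/andP => [e|[/eqP-> /eqP->]] //.
by have := congr1 (@unpair m n) e; rewrite !unpair_mxvec_index => -[-> ->].
Qed.

Lemma sum_mxvec_index (V : nmodType) (F : 'I_(m * n) -> V) :
  \sum_a F a = \sum_(i < m) \sum_(j < n) F (mxvec_index i j).
Proof.
rewrite pair_big /= (reindex (fun x : 'I_m * 'I_n => mxvec_index x.1 x.2)) //=.
by exists (@unpair m n) => [[i j]|a] _; rewrite ?unpair_mxvec_index ?mxvec_index_unpair.
Qed.

End Indexing.

Lemma sum_ord2 (V : nmodType) (F : 'I_2 -> V) : \sum_(i < 2) F i = F ord0 + F ord_max.
Proof. by rewrite big_ord_recl big_ord1; congr (_ + F _); apply: val_inj. Qed.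

Lemma sum_delta (R : pzSemiRingType) n (F : 'I_n -> R) (i : 'I_n) :
  \sum_j (i == j)%:R * F j = F i.
Proof.
rewrite (bigD1 i) //= eqxx mul1r big1 ?addr0 // => j /negPf.
by rewrite eq_sym => ->; rewrite mul0r.
Qed.

Lemma sum_supp2 (V : nmodType) n (p q : 'I_n) (F : 'I_n -> V) : p != q ->
  (forall r, r != p -> r != q -> F r = 0) -> \sum_r F r = F p + F q.
Proof.
move=> pq F0; rewrite (bigD1 p) //= (bigD1 q) /=; last by rewrite eq_sym.
by rewrite big1 ?addr0 // => r /andP[]; apply: F0.
Qed.

Lemma mxtrace_delta (R : pzSemiRingType) n (i j : 'I_n) :
  \tr (delta_mx i j : 'M[R]_n) = (i == j)%:R.
Proof.
rewrite /mxtrace (bigD1 i) //= big1 => [|x /negPf xi]; rewrite !mxE ?eqxx ?xi //.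
by rewrite addr0.
Qed.

Lemma sum_offdiag_swap (V : nmodType) n (F : 'I_n -> 'I_n -> V) :
  \sum_p \sum_(q | q != p) F q p = \sum_p \sum_(q | q != p) F p q.
Proof.
under eq_bigr do rewrite big_mkcond.
rewrite exchange_big; apply: eq_bigr => p _; rewrite [RHS]big_mkcond.
by apply: eq_bigr => q _; rewrite eq_sym.
Qed.

Section QuadraticForms.
Variable C : numClosedFieldType.

Definition qform n (A : 'M[C]_n) (v : 'cV[C]_n) :=
  \sum_a \sum_b (v a 0)^* * A a b * v b 0.

Lemma qformE n (A : 'M[C]_n) v :
  ((map_mx (fun x => x^*) v)^T *m A *m v) 0 0 = qform A v.
Proof.
rewrite /qform mxE exchange_big; apply: eq_bigr => b _; rewrite mxE mulr_suml.
by apply: eq_bigr => a _; rewrite !mxE.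
Qed.

Lemma qform_col m n (A : 'M[C]_(m * n)) (f : 'I_m -> 'I_n -> C) :
  qform A (\col_a f (unpair a).1 (unpair a).2) =
  \sum_i \sum_j (f i j)^* *
    (\sum_i' \sum_j' A (mxvec_index i j) (mxvec_index i' j') * f i' j').
Proof.
rewrite /qform sum_mxvec_index; apply: eq_bigr => i _; apply: eq_bigr => j _.
rewrite sum_mxvec_index mulr_sumr; apply: eq_bigr => i' _.
rewrite mulr_sumr; apply: eq_bigr => j' _.
by rewrite !mxE !unpair_mxvec_index mulrA.
Qed.

Lemma conjC_mul_ge0 (x : C) : 0 <= x^* * x.
Proof. by rewrite mulrC mul_conjC_ge0. Qed.

Lemma psd_rank1 n (g : 'I_n -> C) : psd (\matrix_(x, y) (g x * (g y)^*)).
Proof.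
move=> v; rewrite qformE /qform.
suff -> : \sum_a \sum_b (v a 0)^* * (\matrix_(x, y) (g x * (g y)^*)) a b * v b 0 =
    (\sum_a (g a)^* * v a 0)^* * (\sum_b (g b)^* * v b 0) by exact: conjC_mul_ge0.
rewrite rmorph_sum mulr_suml; apply: eq_bigr => a _; rewrite mulr_sumr.
by apply: eq_bigr => b _; rewrite mxE rmorphM /= conjCK; ring.
Qed.

End QuadraticForms.

Section TwoByTwo.
Variable C : numClosedFieldType.
Implicit Types (u v : 'I_2 -> C) (A B E D : 'I_2 -> 'I_2 -> C).

Definition tr2 A := A ord0 ord0 + A ord_max ord_max.

(* The map R_2 of the paper, which on 2x2 matrices is the adjugate. *)
Definition adj2 A s t := tr2 A *+ (s == t) - A s t.

Definition sqnorm2 u := (u ord0)^* * u ord0 + (u ord_max)^* * u ord_max.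

Definition form2 u A v := \sum_s \sum_t (u s)^* * A s t * v t.

Definition block_form A B E D u v :=
  form2 u A u + form2 u B v + form2 v E u + form2 v D v.

Definition cross_form u v B E := form2 u (fun s t => B s t - adj2 E s t) v.

Definition flip2 u (s : 'I_2) := if s == ord0 then (u ord_max)^* else - (u ord0)^*.

Lemma sqnorm2_ge0 u : 0 <= sqnorm2 u.
Proof. by rewrite addr_ge0 // conjC_mul_ge0. Qed.

Lemma sqnorm2_eq0 u : sqnorm2 u = 0 -> u ord0 = 0 /\ u ord_max = 0.
Proof.
move/eqP; rewrite paddr_eq0 ?conjC_mul_ge0 // !(mulrC (_^*)) !mul_conjC_eq0.
by case/andP=> /eqP-> /eqP->.
Qed.

Lemma tr2_ge0 A : (forall u, 0 <= form2 u A u) -> 0 <= tr2 A.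
Proof.
move=> A_ge0; apply: addr_ge0.
- have := A_ge0 (fun s => (s == ord0)%:R); rewrite /form2 !sum_ord2 /=.
  by rewrite ?(conjC0, conjC1, mulr0, mul0r, mulr1, mul1r, addr0, add0r).
- have := A_ge0 (fun s => (s == ord_max)%:R); rewrite /form2 !sum_ord2 /=.
  by rewrite ?(conjC0, conjC1, mulr0, mul0r, mulr1, mul1r, addr0, add0r).
Qed.

Lemma cross_form_sqnorm0l u v B E : sqnorm2 u = 0 -> cross_form u v B E = 0.
Proof.
case/sqnorm2_eq0=> u0 u1.
by rewrite /cross_form /form2 !sum_ord2 u0 u1 conjC0 !(mul0r, add0r).
Qed.

Lemma cross_form_sqnorm0r u v B E : sqnorm2 v = 0 -> cross_form u v B E = 0.
Proof.
case/sqnorm2_eq0=> v0 v1.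
by rewrite /cross_form /form2 !sum_ord2 v0 v1 !(mulr0, addr0).
Qed.

(* The second pair of test vectors produces the R_2 terms, because
   form2 (flip2 u) A (flip2 v) = form2 v (adj2 A) u. *)
Lemma block_form_test_vectors A B E D u v (z : C) : z * z^* = 1 ->
  block_form A B E D (fun s => sqnorm2 v * u s) (fun s => - (z * sqnorm2 u * v s)) +
  block_form A B E D (fun s => sqnorm2 v * flip2 u s) (fun s => z^* * sqnorm2 u * flip2 v s) =
  sqnorm2 u * sqnorm2 v * (sqnorm2 u * tr2 D + sqnorm2 v * tr2 A
    - z * cross_form u v B E - z^* * cross_form v u E B).
Proof.
move=> zz; rewrite /block_form /cross_form /form2 /adj2 /tr2 /sqnorm2 /flip2 !sum_ord2 /=.
rewrite !(rmorphD, rmorphM, rmorphN, rmorphB) /= !conjCK /= !(mulr0n, mulr1n).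
ring: zz.
Qed.

Lemma block_form_cross_ge0 A B E D u v (z : C) : z * z^* = 1 ->
  (forall u v, 0 <= block_form A B E D u v) ->
  0 <= sqnorm2 u * tr2 D + sqnorm2 v * tr2 A
       - z * cross_form u v B E - z^* * cross_form v u E B.
Proof.
move=> zz block_ge0.
have trA : 0 <= tr2 A.
  apply: tr2_ge0 => w; have := block_ge0 w (fun=> 0).
  by rewrite /block_form /form2 !sum_ord2 ?(conjC0, mulr0, mul0r, addr0).
have trD : 0 <= tr2 D.
  apply: tr2_ge0 => w; have := block_ge0 (fun=> 0) w.
  by rewrite /block_form /form2 !sum_ord2 ?(conjC0, mulr0, mul0r, addr0, add0r).
have [u0|u_neq0] := eqVneq (sqnorm2 u) 0.
  rewrite (cross_form_sqnorm0l v B E u0) (cross_form_sqnorm0r v E B u0) u0.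
  by rewrite mul0r add0r !mulr0 !subr0 mulr_ge0 ?sqnorm2_ge0.
have [v0|v_neq0] := eqVneq (sqnorm2 v) 0.
  rewrite (cross_form_sqnorm0r u B E v0) (cross_form_sqnorm0l u E B v0) v0.
  by rewrite mul0r addr0 !mulr0 !subr0 mulr_ge0 ?sqnorm2_ge0.
have uv_gt0 : 0 < sqnorm2 u * sqnorm2 v by rewrite mulr_gt0 // lt_def ?u_neq0 ?v_neq0 sqnorm2_ge0.
by rewrite -(pmulr_rge0 _ uv_gt0) -block_form_test_vectors // addr_ge0.
Qed.

End TwoByTwo.

Section PhiMatrix.
Variables (C : numClosedFieldType) (k : nat) (z : 'I_k -> 'I_k -> C).
Local Notation mi := (@mxvec_index k 2).
Local Notation block X p q := (fun s t : 'I_2 => X (mi p s) (mi q t)).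
Local Notation slice w p := (fun s : 'I_2 => w (mi p s) 0).
Local Notation c := ((2 * (k.-1)%:R)^-1 : C).

Lemma blk_delta p q s t p' q' :
  blk (delta_mx (mi p s) (mi q t) : 'M[C]_(k * 2)) p' q' =
  ((p' == p) && (q' == q))%:R *: delta_mx s t.
Proof.
apply/matrixP => s' t'; rewrite !mxE !eq_mxvec_index.
by case: (p' == p); case: (q' == q); case: (s' == s); case: (t' == t);
  rewrite /= ?mul1r ?mul0r.
Qed.

Definition Phi_unit (p q : 'I_k) (s t : 'I_2) (p' q' : 'I_k) (s' t' : 'I_2) : C :=
  if p' == q' then
    c * ([&& p == q & s == t]%:R - [&& p' == p, p' == q & s == t]%:R) * (s' == t')%:R
  else
    - (z p' q' * c) * ([&& p' == p, q' == q, s' == s & t' == t]%:R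
      - [&& q' == p & p' == q]%:R * ([&& s == t & s' == t']%:R - [&& s' == s & t' == t]%:R)).

Lemma Phi_delta p q s t p' q' s' t' :
  Phi z (delta_mx (mi p s) (mi q t)) (mi p' s') (mi q' t') = Phi_unit p q s t p' q' s' t'.
Proof.
rewrite /Phi /Phi_unit mxE !unpair_mxvec_index /= !blk_delta mxtrace_delta mxtraceZ.
rewrite mxtrace_delta eq_mxvec_index /R2 mxtraceZ mxtrace_delta !mxE.
rewrite -!mulnb !natrM -[_ *+ (s' == t')]mulr_natr.
by case: ifP => _; ring.
Qed.

Lemma mxtrace_blocks (X : 'M[C]_(k * 2)) : \tr X = \sum_q tr2 (block X q q).
Proof. by rewrite /mxtrace sum_mxvec_index; apply: eq_bigr => q _; rewrite sum_ord2. Qed.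

Lemma form2_Phi_diag (X : 'M[C]_(k * 2)) (w : 'cV[C]_(k * 2)) p :
  form2 (slice w p) (block (Phi z X) p p) (slice w p) =
  \sum_(q | q != p) c * (sqnorm2 (slice w p) * tr2 (block X q q)).
Proof.
have trX : \sum_(q | q != p) tr2 (block X q q) = \tr X - tr2 (block X p p).
  by rewrite mxtrace_blocks [in RHS](bigD1 p) //= addrAC subrr add0r.
rewrite -mulr_sumr; under eq_bigr do rewrite mulrC; rewrite -mulr_suml trX.
rewrite /form2 !sum_ord2 !mxE !unpair_mxvec_index /= eqxx.
rewrite /mxtrace sum_ord2 !mxE /tr2 /sqnorm2 /=.
ring.
Qed.

Lemma form2_Phi_offdiag (X : 'M[C]_(k * 2)) (w : 'cV[C]_(k * 2)) p q : q != p ->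
  form2 (slice w p) (block (Phi z X) p q) (slice w q) =
  - (c * z p q * cross_form (slice w p) (slice w q) (block X p q) (block X q p)).
Proof.
move=> qp; rewrite /cross_form /form2 /adj2 /tr2 !sum_ord2 !mxE !unpair_mxvec_index /=.
rewrite eq_sym (negbTE qp) /R2 /mxtrace !sum_ord2 !mxE /= !(mulr0n, mulr1n, subr0).
ring.
Qed.

Lemma qform_blocks (A : 'M[C]_(k * 2)) (w : 'cV[C]_(k * 2)) :
  qform A w = \sum_p \sum_q form2 (slice w p) (block A p q) (slice w q).
Proof.
rewrite /qform sum_mxvec_index; apply: eq_bigr => p _.
rewrite /form2 [RHS]exchange_big; apply: eq_bigr => s _.
by rewrite sum_mxvec_index.
Qed.

Lemma qform_Phi (X : 'M[C]_(k * 2)) (w : 'cV[C]_(k * 2)) :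
  qform (Phi z X) w = c * \sum_p \sum_(q | q != p)
    (sqnorm2 (slice w p) * tr2 (block X q q)
     - z p q * cross_form (slice w p) (slice w q) (block X p q) (block X q p)).
Proof.
rewrite qform_blocks mulr_sumr; apply: eq_bigr => p _.
rewrite (bigD1 p) //= form2_Phi_diag mulr_sumr -big_split /=.
by apply: eq_bigr => q qp; rewrite form2_Phi_offdiag //; ring.
Qed.

Lemma psd_block_form_ge0 (X : 'M[C]_(k * 2)) p q : psd X -> p != q -> forall u v,
  0 <= block_form (block X p p) (block X p q) (block X q p) (block X q q) u v.
Proof.
move=> psdX pq u v.
pose w := \col_a (let r := (unpair a).1 in let s := (unpair a).2 in
  if r == p then u s else if r == q then v s else 0) : 'cV[C]_(k * 2).
have slice_w r s : w (mi r s) 0 = if r == p then u s else if r == q then v s else 0.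
  by rewrite mxE unpair_mxvec_index.
have qp : q != p by rewrite eq_sym.
suff <- : qform X w = block_form (block X p p) (block X p q) (block X q p) (block X q q) u v.
  by rewrite -qformE; apply: psdX.
have out_l r r' : r != p -> r != q -> form2 (slice w r) (block X r r') (slice w r') = 0.
  move=> rp rq; rewrite /form2 !sum_ord2 !slice_w (negbTE rp) (negbTE rq) conjC0.
  by rewrite !mul0r !addr0.
have out_r r r' : r' != p -> r' != q -> form2 (slice w r) (block X r r') (slice w r') = 0.
  move=> rp rq; rewrite /form2 !sum_ord2 !slice_w (negbTE rp) (negbTE rq).
  by rewrite !mulr0 !addr0.
rewrite qform_blocks (sum_supp2 pq) => [|r rp rq]; last first.
  by rewrite big1 // => r' _; apply: out_l.
rewrite !(sum_supp2 pq) => [|r rp rq|r rp rq]; try exact: out_r.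
rewrite /block_form /form2 !sum_ord2 !slice_w eqxx (negbTE qp) eqxx.
ring.
Qed.

Lemma qform_Phi_sym (X : 'M[C]_(k * 2)) (w : 'cV[C]_(k * 2)) :
  qform (Phi z X) w = c / 2 * \sum_p \sum_(q | q != p)
    (sqnorm2 (slice w p) * tr2 (block X q q) + sqnorm2 (slice w q) * tr2 (block X p p)
     - z p q * cross_form (slice w p) (slice w q) (block X p q) (block X q p)
     - z q p * cross_form (slice w q) (slice w p) (block X q p) (block X p q)).
Proof.
set F := fun p q => sqnorm2 (slice w p) * tr2 (block X q q)
  - z p q * cross_form (slice w p) (slice w q) (block X p q) (block X q p).
transitivity (c / 2 * (\sum_p \sum_(q | q != p) F p q + \sum_p \sum_(q | q != p) F q p)).
  have half (a S : C) : a * S = a / 2 * (S + S) by field.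
  by rewrite (sum_offdiag_swap F) qform_Phi half.
congr (_ * _); rewrite -big_split; apply: eq_bigr => p _.
by rewrite -big_split; apply: eq_bigr => q _; rewrite /F /=; ring.
Qed.

Lemma Phi_psd (X : 'M[C]_(k * 2)) :
  (forall p q : 'I_k, p != q -> z p q * (z p q)^* = 1 /\ z q p = (z p q)^*) ->
  psd X -> psd (Phi z X).
Proof.
move=> z_unit psdX w; rewrite qformE qform_Phi_sym.
apply: mulr_ge0; first by rewrite divr_ge0 ?invr_ge0 ?mulr_ge0.
apply: sumr_ge0 => p _; apply: sumr_ge0 => q; rewrite eq_sym => pq.
have [zz ->] := z_unit p q pq.
exact: block_form_cross_ge0 zz (psd_block_form_ge0 psdX pq).
Qed.

End PhiMatrix.

Section ChoiForm.
Variables (C : numClosedFieldType) (m n : nat) (io : 'I_m -> 'I_n).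

Lemma sum_collapse (H : 'I_n -> C) (f : 'I_m -> C) :
  \sum_y H y * (\sum_a (y == io a)%:R * f a) = \sum_a H (io a) * f a.
Proof.
under eq_bigr do rewrite mulr_sumr.
rewrite exchange_big; apply: eq_bigr => a _.
rewrite -[RHS](sum_delta (fun y => H y * f a)); apply: eq_bigr => y _.
by rewrite eq_sym; ring.
Qed.

Lemma sum_collapse_conj (K : 'I_n -> C) (f : 'I_m -> C) :
  \sum_y (\sum_a (y == io a)%:R * f a)^* * K y = \sum_a (f a)^* * K (io a).
Proof.
under eq_bigr do rewrite rmorph_sum mulr_suml.
rewrite exchange_big; apply: eq_bigr => a _.
rewrite -[RHS](sum_delta (fun y => (f a)^* * K y)); apply: eq_bigr => y _.
by rewrite rmorphM /= rmorph_nat eq_sym; ring.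
Qed.

Definition choi (L : 'M[C]_n -> 'M[C]_n) (a1 b1 a2 b2 : 'I_m) :=
  L (delta_mx (io a1) (io b1)) (io a2) (io b2).

Definition choi_form (c : 'I_m -> 'I_m -> 'I_m -> 'I_m -> C) (f : 'I_m -> 'I_m -> C) : C :=
  \sum_a1 \sum_a2 (f a1 a2)^* * \sum_b1 \sum_b2 c a1 b1 a2 b2 * f b1 b2.

Lemma choi_form_ge0 (L : 'M[C]_n -> 'M[C]_n) f :
  (forall X : 'M[C]_(m * n), psd X -> psd (ampl L X)) -> 0 <= choi_form (choi L) f.
Proof.
(* Apply id (x) L to |g><g| with g = \sum_a e_a (x) e_(io a): its blocks are the matrix
   units E_(io a1, io b1). *)
move=> L_pos.
pose g (x : 'I_(m * n)) : C := ((unpair x).2 == io (unpair x).1)%:R.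
have blocks a1 b1 :
    \matrix_(s, t) (\matrix_(x, y) (g x * (g y)^*)) (mxvec_index a1 s) (mxvec_index b1 t)
    = delta_mx (io a1) (io b1).
  apply/matrixP => s t; rewrite !mxE /g !unpair_mxvec_index /= rmorph_nat.
  by case: (s == io a1); case: (t == io b1); rewrite ?mul1r ?mul0r.
pose v (a1 : 'I_m) (y : 'I_n) := \sum_a2 (y == io a2)%:R * f a1 a2.
have := L_pos _ (psd_rank1 g) (\col_x v (unpair x).1 (unpair x).2).
rewrite qformE qform_col /choi_form; congr (0 <= _); apply: eq_bigr => a1 _.
under eq_bigr => y _.
  under eq_bigr => b1 _.
    under eq_bigr => y' _ do rewrite /ampl mxE !unpair_mxvec_index /= blocks.
    rewrite sum_collapse.
  over.
over.
by rewrite /v sum_collapse_conj.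
Qed.

Lemma sum_delta2 (i j : 'I_m) (G : 'I_m -> 'I_m -> C) :
  \sum_b1 \sum_b2 ((i == b1) && (j == b2))%:R * G b1 b2 = G i j.
Proof.
rewrite -(sum_delta (fun b1 => G b1 j) i); apply: eq_bigr => b1 _.
rewrite -(sum_delta (G b1) j) mulr_sumr; apply: eq_bigr => b2 _.
by rewrite -mulnb natrM mulrA.
Qed.

Definition sparse (l : seq ('I_m * 'I_m * C)) (a1 a2 : 'I_m) : C :=
  \sum_(x <- l) ((x.1.1 == a1) && (x.1.2 == a2))%:R * x.2.

Lemma choi_form_sparse c l : choi_form c (sparse l) =
  \sum_(x <- l) \sum_(y <- l) (x.2)^* * y.2 * c x.1.1 y.1.1 x.1.2 y.1.2.
Proof.
have inner a1 a2 : \sum_b1 \sum_b2 c a1 b1 a2 b2 * sparse l b1 b2 =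
    \sum_(y <- l) y.2 * c a1 y.1.1 a2 y.1.2.
  transitivity (\sum_b1 \sum_b2 \sum_(y <- l)
      ((y.1.1 == b1) && (y.1.2 == b2))%:R * (y.2 * c a1 b1 a2 b2)).
    apply: eq_bigr => b1 _; apply: eq_bigr => b2 _; rewrite mulr_sumr.
    by apply: eq_bigr => y _; ring.
  under eq_bigr do rewrite exchange_big.
  by rewrite exchange_big; apply: eq_bigr => y _; rewrite sum_delta2.
rewrite /choi_form.
under eq_bigr do under eq_bigr do rewrite inner.
transitivity (\sum_a1 \sum_a2 \sum_(x <- l) ((x.1.1 == a1) && (x.1.2 == a2))%:R *
    ((x.2)^* * \sum_(y <- l) y.2 * c a1 y.1.1 a2 y.1.2)).
  apply: eq_bigr => a1 _; apply: eq_bigr => a2 _.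
  rewrite /sparse rmorph_sum mulr_suml; apply: eq_bigr => x _.
  by rewrite rmorphM /= rmorph_nat; ring.
under eq_bigr do rewrite exchange_big.
rewrite exchange_big; apply: eq_bigr => x _.
by rewrite sum_delta2 mulr_sumr; apply: eq_bigr => y _; ring.
Qed.

End ChoiForm.

Section Witness.
Variables (C : numClosedFieldType) (k : nat).
Hypothesis hk : (2 <= k)%N.

Definition site0 : 'I_k := Ordinal (ltnW hk).
Definition site1 : 'I_k := Ordinal hk.
Definition site (a : 'I_4) : 'I_k := if (a < 2)%N then site0 else site1.
Definition spin (a : 'I_4) : 'I_2 := if odd a then ord_max else ord0.
Definition embed (a : 'I_4) := mxvec_index (site a) (spin a).

Variable z : 'I_k -> 'I_k -> C.
Local Notation o0 := (@Ordinal 4 0 isT).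
Local Notation o1 := (@Ordinal 4 1 isT).
Local Notation o2 := (@Ordinal 4 2 isT).
Local Notation o3 := (@Ordinal 4 3 isT).

Local Notation z01 := (z site0 site1).
Local Notation c := ((2 * (k.-1)%:R)^-1 : C).

Definition pair_vec (a b : 'I_4) (x : C) (a' b' : 'I_4) (y : C) :=
  sparse [:: (a, b, x); (a', b', y)].
Definition unit_vec (a b : 'I_4) := sparse [:: (a, b, 1 : C)].

Definition phase_vec := sparse [:: (o0, o0, 1); (o1, o1, 1); (o2, o2, z01^*); (o3, o3, z01^*)].
Definition phase_vecT := sparse [:: (o0, o1, 1); (o1, o0, -1); (o3, o2, z01^*); (o2, o3, - z01^*)].

(* rho = \sum w |f><f| over rho_terms is the PPT state of the witness argument; rhoT_terms
   decomposes its partial transpose in the same way, which is the content of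
   weighted_form_Phi_split. *)
Definition rho_terms : seq (nat * ('I_4 -> 'I_4 -> C)) :=
  [:: (1, phase_vec);
      (3, unit_vec o0 o0); (3, unit_vec o0 o1); (3, unit_vec o1 o0); (3, unit_vec o1 o1);
      (3, unit_vec o2 o2); (3, unit_vec o2 o3); (3, unit_vec o3 o2); (3, unit_vec o3 o3);
      (1, pair_vec o0 o2 1 o3 o1 z01); (1, pair_vec o1 o3 1 o2 o0 z01);
      (1, pair_vec o0 o3 1 o2 o1 (- z01)); (1, pair_vec o1 o2 1 o3 o0 (- z01))]%N.

Definition rhoT_terms : seq (nat * ('I_4 -> 'I_4 -> C)) :=
  [:: (1, pair_vec o0 o2 1 o2 o0 z01); (1, pair_vec o0 o3 1 o3 o0 z01);
      (1, pair_vec o1 o2 1 o2 o1 z01); (1, pair_vec o1 o3 1 o3 o1 z01);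
      (4, unit_vec o0 o0); (4, unit_vec o1 o1); (4, unit_vec o2 o2); (4, unit_vec o3 o3);
      (2, pair_vec o0 o1 1 o1 o0 1); (2, pair_vec o2 o3 1 o3 o2 1);
      (1, phase_vecT)]%N.

Definition weighted_form (coef : 'I_4 -> 'I_4 -> 'I_4 -> 'I_4 -> C) l : C :=
  \sum_(x <- l) x.1%:R * choi_form coef x.2.

Lemma weighted_form_ge0 (L : 'M[C]_(k * 2) -> 'M[C]_(k * 2)) l :
  (forall X : 'M[C]_(4 * (k * 2)), psd X -> psd (ampl L X)) ->
  0 <= weighted_form (choi embed L) l.
Proof.
by move=> L_pos; apply: sumr_ge0 => x _; rewrite mulr_ge0 ?ler0n ?choi_form_ge0.
Qed.

Hypotheses (z01_unit : z01 * z01^* = 1) (z10_conj : z site1 site0 = z01^*).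

Lemma weighted_form_Phi_split (L1 L2 : 'M[C]_(k * 2) -> 'M[C]_(k * 2)) :
  (forall X, Phi z X = L1 X + L2 X^T) ->
  weighted_form (choi embed (Phi z)) rho_terms =
  weighted_form (choi embed L1) rho_terms + weighted_form (choi embed L2) rhoT_terms.
Proof.
move=> Phi_split.
have choi_split a1 b1 a2 b2 :
    choi embed (Phi z) a1 b1 a2 b2 = choi embed L1 a1 b1 a2 b2 + choi embed L2 b1 a1 a2 b2.
  by rewrite /choi Phi_split mxE trmx_delta.
rewrite /weighted_form /rho_terms /rhoT_terms !big_cons !big_nil /=.
rewrite /phase_vec /phase_vecT /pair_vec /unit_vec !choi_form_sparse unlock /= !choi_split /=.
rewrite ?conjC1 ?rmorphN /= ?conjCK.
ring: z01_unit.
Qed.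

Lemma choi_Phi_embed a1 b1 a2 b2 :
  choi embed (Phi z) a1 b1 a2 b2 =
  Phi_unit z (site a1) (site b1) (spin a1) (spin b1) (site a2) (site b2) (spin a2) (spin b2).
Proof. exact: Phi_delta. Qed.

Lemma weighted_form_Phi_rho :
  weighted_form (choi embed (Phi z)) rho_terms = - (8%:R * c).
Proof.
rewrite /weighted_form /rho_terms !big_cons !big_nil /= /phase_vec /pair_vec /unit_vec.
rewrite !choi_form_sparse unlock /= !choi_Phi_embed /Phi_unit /site /=.
rewrite z10_conj ?conjC1 ?rmorphN /= ?conjCK.
ring: z01_unit.
Qed.

Lemma Phi_not_decomposable : ~ decomposable (Phi z).
Proof.
case=> L1 [L2 [[_ L1_pos] [_ L2_pos] Phi_split]].
have := addr_ge0 (weighted_form_ge0 rho_terms (L1_pos 4%N))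
                 (weighted_form_ge0 rhoT_terms (L2_pos 4%N)).
rewrite -weighted_form_Phi_split // weighted_form_Phi_rho oppr_ge0 lt_geF //.
have k1_gt0 : (0 < k.-1)%N by rewrite -ltnS prednK // ltnW.
by rewrite mulr_gt0 ?invr_gt0 ?mulr_gt0 ?ltr0n.
Qed.

End Witness.

Lemma unit_phases (C : numClosedFieldType) k (z : 'I_k -> 'I_k -> C) :
  (forall i j : 'I_k, (i < j)%N -> `|z i j| = 1 /\ z j i = (z i j)^*) ->
  forall p q : 'I_k, p != q -> z p q * (z p q)^* = 1 /\ z q p = (z p q)^*.
Proof.
move=> hz p q; case: (ltngtP p q) => [lt_pq|lt_qp|/val_inj->]; last by rewrite eqxx.
- by have [z1 ->] := hz p q lt_pq; rewrite -normCK z1 expr1n.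
- by have [z1 ->] := hz q p lt_qp; rewrite conjCK mulrC -normCK z1 expr1n.
Qed.

Theorem mainTheorem9 (C : numClosedFieldType) (k : nat) (z : 'I_k -> 'I_k -> C)
  (hk : (2 <= k)%N)
  (hz : forall i j : 'I_k, (i < j)%N -> `|z i j| = 1 /\ z j i = (z i j)^*) :
  positive_map (Phi z) /\ ~ decomposable (Phi z).
Proof.
have z_unit := unit_phases hz.
split; first by move=> X; apply: Phi_psd.
have [z01_unit z10_conj] := z_unit (site0 hk) (site1 hk) isT.
exact: Phi_not_decomposable z01_unit z10_conj.
Qed.
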